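(* Assume the standing setting and hypothesis (H) below. Let $y\in S$ and let $z\in\mathcal{X}$ be its $\varepsilon$-representative. Then for every pattern $\pi\in U^k$ and every $t\in[0,k\tau]$, $$\|Y^{\pi}_{t,y}-\tilde{Y}^{\pi}_{t,z}\|\le\varepsilon.$$
   Context: Setting. Fix integers $M,k\ge1$, reals $L>0$, $\sigma>0$, $\tau>0$, $\varepsilon>0$; $h=L/(M+1)$, $S=[0,1]^M$, Euclidean norm $\|\cdot\|$ and inner product $\langle\cdot,\cdot\rangle$. $\mathcal{L}_h=\frac1{h^2}\mathrm{tridiag}(1,-2,1)$ ($M\times M$). $U\subset[0,1]^2$ is a finite set of modes; for $u=(u_0,u_L)$, $\varphi_h(u)=\frac1{h^2}(u_0,0,\dots,0,u_L)^\top$. A map $f:\mathbb{R}^M\to\mathbb{R}^M$ is given and $f_u(y)=\sigma\mathcal{L}_hy+\sigma\varphi_h(u)+f(y)$, assumed Lipschitz on $S$ with constant $L_u$. $\lambda_u$ is the OSL constant of $f_u$ on $S$ (smallest constant with $\langle f_u(y_1)-f_u(y_2),y_1-y_2\rangle\le\lambda_u\|y_1-y_2\|^2$ for all $y_1,y_2\in S$), and $C_u=\sup_{y\in S}L_u\|f_u(y)\|$. Trajectories. For a pattern $\pi=u_k\cdots u_1\in U^k$ and $y\in S$, $Y^\pi_{t,y}$ ($t\in[0,k\tau]$) is the continuous solution of $dy/dt=f_{u_k}(y)$ on $[0,\tau)$ with $Y^\pi_{0,y}=y$, continued by the solution of $dy/dt=f_{u_{k-1}}(y)$ on $[\tau,2\tau)$,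 and so on up to $f_{u_1}$ on $[(k-1)\tau,k\tau]$. The Euler image is $\tilde Y^u_{t,z}=z+tf_u(z)$ for $t\in[0,\tau]$, and for a pattern $\tilde Y^\pi_{t,z}=\tilde Y^{u_k}_{t,z}$ for $t\in[0,\tau]$ and $\tilde Y^{\pi}_{t,z}=\tilde Y^{u_{k-1}\cdots u_1}_{t-\tau,\tilde Y^{u_k}_{\tau,z}}$ for $t\in[\tau,k\tau]$. It is assumed that all these exact and Euler trajectories remain in $S$. Grid. $K$ is an integer with $K\ge\sqrt{M}/(2\varepsilon)$; $[0,1]$ is split into $K$ equal subintervals, hence $S$ into $K^M$ equal cubic cells; $\mathcal{X}$ is the set of cell centers. The $\varepsilon$-representative of $y\in S$ is the center of a (fixed choice of) cell containing $y$, so $\|y-z\|\le\varepsilon$. Hypothesis (H). For each $u\in U$ let $G_u=\sqrt3\,\varepsilon|\lambda_u|/C_u$ and $\alpha_u=1+\frac{|\lambda_u|G_u}{4}-\sqrt{1+(\lambda_uG_u/4)^2}$. (H) requires, for all $u\in U$: $\lambda_u<0$, $\frac{|\lambda_u|G_u}{4}<1$, and $\tau\le G_u(1-\alpha_u)$. *)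

From Stdlib Require Import Reals List.
From mathcomp Require Import all_boot.
Set Implicit Arguments.
Unset Strict Implicit.
Open Scope R_scope.

Definition vec (M : nat) := 'I_M -> R.

Definition vadd {M} (x y : vec M) : vec M := fun i => x i + y i.
Definition vsub {M} (x y : vec M) : vec M := fun i => x i - y i.
Definition vscale {M} (a : R) (x : vec M) : vec M := fun i => a * x i.

Definition vdot {M} (x y : vec M) : R := \big[Rplus/0]_(i < M) (x i * y i).
Definition vnorm {M} (x : vec M) : R := sqrt (vdot x x).

(* coordinate j (0-based, as a nat) of x, and 0 outside {0..M-1} *)
Definition vget {M} (x : vec M) (j : nat) : R :=
  match @insub nat (fun n => (n < M)%N) 'I_M j with
  | Some i => x i
  | None => 0
  end.

Definition inS {M} (y : vec M) : Prop := forall i, 0 <= y i <= 1.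

(* L_h = (1/h^2) tridiag(1,-2,1) *)
Definition Lh {M} (h : R) (y : vec M) : vec M := fun i =>
  ((if (nat_of_ord i == 0)%N then 0 else vget y (nat_of_ord i).-1)
   - 2 * y i + vget y (nat_of_ord i).+1) / (h * h).

(* modes u = (u_0, u_L); phi_h(u) = (1/h^2) (u_0, 0, ..., 0, u_L)^T *)
Definition mode := (R * R)%type.
Definition phih {M} (h : R) (u : mode) : vec M := fun i =>
  ((if (nat_of_ord i == 0)%N then fst u else 0)
   + (if (nat_of_ord i == M.-1)%N then snd u else 0)) / (h * h).

Definition fu {M} (h sigma : R) (f : vec M -> vec M) (u : mode) (y : vec M)
  : vec M :=
  vadd (vadd (vscale sigma (Lh h y)) (vscale sigma (phih h u))) (f y).

Definition lipschitz_on_S {M} (g : vec M -> vec M) (Lc : R) : Prop :=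
  forall y1 y2, inS y1 -> inS y2 ->
    vnorm (vsub (g y1) (g y2)) <= Lc * vnorm (vsub y1 y2).

Definition osl_on_S {M} (g : vec M -> vec M) (c : R) : Prop :=
  forall y1 y2, inS y1 -> inS y2 ->
    vdot (vsub (g y1) (g y2)) (vsub y1 y2) <= c * (vnorm (vsub y1 y2))^2.

Definition is_OSL_constant {M} (g : vec M -> vec M) (lam : R) : Prop :=
  osl_on_S g lam /\ (forall c, osl_on_S g c -> lam <= c).

Definition is_C_constant {M} (g : vec M -> vec M) (Lc Cc : R) : Prop :=
  is_lub (fun r => exists y, inS y /\ r = Lc * vnorm (g y)) Cc.

Definition G_u (eps lam Cc : R) : R := sqrt 3 * eps * Rabs lam / Cc.
Definition alpha_u (lam G : R) : R :=
  1 + Rabs lam * G / 4 - sqrt (1 + (lam * G / 4)^2).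

(* A pattern pi = u_k ... u_1 is represented by the list [u_k; ...; u_1]
   (head = first mode applied). *)
Definition pattern_in (U : list mode) (k : nat) (pi : list mode) : Prop :=
  length pi = k /\ (forall u, In u pi -> In u U).

(* Exact trajectory Y^pi_{t,y}, t in [0, k tau]: continuous on [0,k tau],
   Y 0 = y, and on the j-th piece [j tau, (j+1) tau) (j = 0..k-1) it solves
   dy/dt = f_{nth j pi}(y) (derivative required on the open piece; together
   with continuity this is the usual notion of the continued solution). *)
Definition exact_traj {M} (fU : mode -> vec M -> vec M) (tau : R)
  (pi : list mode) (y : vec M) (Y : R -> vec M) : Prop :=
  let k := length pi in
  Y 0 = y /\
  (forall t, 0 <= t <= INR k * tau -> forall i,
      limit1_in (fun s => Y s i) (fun s => 0 <= s <= INR k * tau) (Y t i) t) /\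
  (forall (j : nat) t, (j < k)%nat -> INR j * tau < t < INR (S j) * tau ->
     forall i, derivable_pt_lim (fun s => Y s i) t
                 (fU (List.nth j pi (0, 0)) (Y t) i)).

Fixpoint euler_traj {M} (fU : mode -> vec M -> vec M) (tau : R)
  (pi : list mode) (t : R) (z : vec M) : vec M :=
  match pi with
  | nil => z
  | u :: rest =>
      if Rle_dec t tau then vadd z (vscale t (fU u z))
      else euler_traj fU tau rest (t - tau) (vadd z (vscale tau (fU u z)))
  end.

(* Grid: [0,1] split into K equal subintervals; cell centers *)
Definition is_center {M} (K : nat) (z : vec M) : Prop :=
  forall i, exists m : nat, (m < K)%nat /\ z i = (2 * INR m + 1) / (2 * INR K).

Definition in_cell {M} (K : nat) (z y : vec M) : Prop :=
  forall i, z i - 1 / (2 * INR K) <= y i <= z i + 1 / (2 * INR K).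

Definition is_representative {M} (K : nat) (y z : vec M) : Prop :=
  is_center K z /\ in_cell K z y.

Set Warnings "-notation-overridden -ambiguous-paths".
From Stdlib Require Import Reals List Lra Psatz FunctionalExtensionality.
From mathcomp Require Import all_boot zify.
From Coquelicot Require Import Coquelicot.
Set Implicit Arguments.
Unset Strict Implicit.
Open Scope R_scope.

(* Fix a piece [a, a + tau] of a pattern with active field g = f_u.  Let
   Y be the exact solution and L(s) = E + (s - a) g(E) the Euler line.  The
   error e = Y - L satisfies, by the one-sided Lipschitz bound for g and
   the Lipschitz bound |g(L(s)) - g(E)| <= C (s - a),
       d|e|/ds <= lambda |e| + C (s - a)      (lambda = -mu < 0),
   wherever e <> 0.  A comparison principle bounds |e| by a supersolution w
   of w' = -mu w + C xi with w(0) = eps; we use the degree-4 Taylor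
   polynomial of the exact solution, and hypothesis (H) is precisely the
   algebraic condition under which w <= eps on the whole piece.  Chaining the
   pieces by induction, starting from |y - z| <= eps (grid resolution),
   gives the theorem. *)

Section RealSums.
Variable I : Type.
Implicit Types (r : seq I) (F G : I -> R).

Lemma sumR_add r F G : \big[Rplus/0]_(i <- r) (F i + G i) =
  \big[Rplus/0]_(i <- r) F i + \big[Rplus/0]_(i <- r) G i.
Proof. by elim: r => [|x r IH]; rewrite ?big_nil ?big_cons ?IH; lra. Qed.

Lemma sumR_sub r F G : \big[Rplus/0]_(i <- r) (F i - G i) =
  \big[Rplus/0]_(i <- r) F i - \big[Rplus/0]_(i <- r) G i.
Proof. by elim: r => [|x r IH]; rewrite ?big_nil ?big_cons ?IH; lra. Qed.

Lemma sumR_scale r c F :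
  \big[Rplus/0]_(i <- r) (c * F i) = c * \big[Rplus/0]_(i <- r) F i.
Proof. by elim: r => [|x r IH]; rewrite ?big_nil ?big_cons ?IH; lra. Qed.

Lemma sumR_le r F G : (forall i, F i <= G i) ->
  \big[Rplus/0]_(i <- r) F i <= \big[Rplus/0]_(i <- r) G i.
Proof.
move=> FG; elim: r => [|x r IH]; rewrite ?big_nil ?big_cons; first lra.
by have := FG x; lra.
Qed.

Lemma sumR_ge0 r F : (forall i, 0 <= F i) -> 0 <= \big[Rplus/0]_(i <- r) F i.
Proof.
move=> F0; elim: r => [|x r IH]; rewrite ?big_nil ?big_cons; first lra.
by have := F0 x; lra.
Qed.

Lemma sumR_derive r (F D : I -> R -> R) t :
  (forall i, derivable_pt_lim (F i) t (D i t)) ->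
  derivable_pt_lim (fun s => \big[Rplus/0]_(i <- r) F i s) t
                   (\big[Rplus/0]_(i <- r) D i t).
Proof.
move=> dF; elim: r => [|x r IH].
- rewrite big_nil; apply: (derivable_pt_lim_ext (fun _ => 0) _ t 0).
  + by move=> s; rewrite big_nil.
  + exact: derivable_pt_lim_const.
- rewrite big_cons.
  apply: (derivable_pt_lim_ext (fun s => F x s + \big[Rplus/0]_(i <- r) F i s)).
  + by move=> s; rewrite big_cons.
  + exact: derivable_pt_lim_plus.
Qed.

Lemma sumR_limit r (F : I -> R -> R) (P : R -> Prop) t :
  (forall i, limit1_in (F i) P (F i t) t) ->
  limit1_in (fun s => \big[Rplus/0]_(i <- r) F i s) P
            (\big[Rplus/0]_(i <- r) F i t) t.
Proof.
move=> cF; elim: r => [|x r IH].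
- rewrite big_nil; apply: (limit1_ext (fun _ => 0) _ P 0 t).
  + by move=> s _; rewrite big_nil.
  + exact: (limit_free (fun _ => 0) P 0 t).
- rewrite big_cons.
  apply: (limit1_ext (fun s => F x s + \big[Rplus/0]_(i <- r) F i s)).
  + by move=> s _; rewrite big_cons.
  + exact: limit_plus.
Qed.
End RealSums.

Lemma sumR_const (n : nat) c : \big[Rplus/0]_(i < n) c = INR n * c.
Proof.
rewrite big_const_ord; elim: n => [|n IH]; first by rewrite /=; lra.
by rewrite S_INR -[iter _ _ _]/(c + iter n (Rplus c) 0) IH; lra.
Qed.

(* Taking t = (sqrt Y + d)/(sqrt X + d)
   gives v <= (sqrt X + d)(sqrt Y + d) for every small d > 0. *)
Lemma le_sqrt_mul_of_weighted_bound v X Y : 0 <= X -> 0 <= Y ->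
  (forall t, 0 < t -> 2 * v <= t * X + Y / t) -> v <= sqrt X * sqrt Y.
Proof.
move=> X0 Y0 vXY.
have [a0 aa] := (sqrt_pos X, sqrt_sqrt X X0).
have [b0 bb] := (sqrt_pos Y, sqrt_sqrt Y Y0).
set a := sqrt X in a0 aa *; set b := sqrt Y in b0 bb *.
move: vXY; rewrite -aa -bb => vab.
apply: Rle_plus_epsilon => e e0.
set d := Rmin 1 (e / (a + b + 1)).
have d0 : 0 < d.
{ apply: Rmin_glb_lt; first lra. apply: Rdiv_lt_0_compat; lra. }
have d1 : d <= 1 := Rmin_l _ _.
have de : d * (a + b + 1) <= e.
{ have := Rmin_r 1 (e / (a + b + 1)); rewrite -/d => h.
  have -> : e = e / (a + b + 1) * (a + b + 1) by field; lra.
  apply: Rmult_le_compat_r; lra. }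
have t0 : 0 < (b + d) / (a + d) by apply: Rdiv_lt_0_compat; lra.
have := vab _ t0.
have ta : (a + d) * (b + d) - (b + d) / (a + d) * (a * a) =
          (b + d) * (d * (2 * a + d)) / (a + d) by field; lra.
have tb : (a + d) * (b + d) - b * b / ((b + d) / (a + d)) =
          (a + d) * (d * (2 * b + d)) / (b + d) by field; lra.
have : 0 <= (b + d) * (d * (2 * a + d)) / (a + d).
{ apply: Rdiv_le_0_compat; last lra. apply: Rmult_le_pos; nra. }
have : 0 <= (a + d) * (d * (2 * b + d)) / (b + d).
{ apply: Rdiv_le_0_compat; last lra. apply: Rmult_le_pos; nra. }
nra.
Qed.

Section Euclid.
Variable M : nat.
Implicit Types (x y p q : vec M).

Lemma vdot_sym x y : vdot x y = vdot y x.
Proof. by rewrite /vdot; apply: eq_bigr => i _; ring. Qed.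

Lemma vdot_ge0 x : 0 <= vdot x x.
Proof. by apply: sumR_ge0 => i; nra. Qed.

Lemma vdot_sub_r e p q : vdot e (vsub p q) = vdot e p - vdot e q.
Proof. by rewrite /vdot -sumR_sub; apply: eq_bigr => i _; rewrite /vsub; ring. Qed.

Lemma vnorm_scale a x : vnorm (vscale a x) = Rabs a * vnorm x.
Proof.
rewrite /vnorm.
have -> : vdot (vscale a x) (vscale a x) = (a * a) * vdot x x.
  by rewrite /vdot -sumR_scale; apply: eq_bigr => i _; rewrite /vscale; ring.
by rewrite sqrt_mult_alt -?sqrt_Rsqr_abs //; nra.
Qed.

Lemma cauchy_schwarz x y : vdot x y <= vnorm x * vnorm y.
Proof.
apply: le_sqrt_mul_of_weighted_bound; try exact: vdot_ge0.
move=> t t0; rewrite /vdot /Rdiv -(sumR_scale _ 2) -(sumR_scale _ t).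
rewrite [_ * / t]Rmult_comm -sumR_scale -sumR_add; apply: sumR_le => i.
have : 0 <= (t * x i - y i) * (t * x i - y i) / t.
{ apply: Rdiv_le_0_compat; [exact: Rle_0_sqr | lra]. }
have -> : (t * x i - y i) * (t * x i - y i) / t =
          t * (x i * x i) - 2 * (x i * y i) + / t * (y i * y i) by field; lra.
lra.
Qed.
End Euclid.

Section EulerImage.
Variables (M : nat) (fU : mode -> vec M -> vec M) (tau : R).
Hypothesis tau_gt0 : 0 < tau.

Lemma vadd_scale0 (z v : vec M) : vadd z (vscale 0 v) = z.
Proof. by apply: functional_extensionality => i; rewrite /vadd /vscale; ring. Qed.

Lemma euler_at0 pi z : euler_traj fU tau pi 0 z = z.
Proof.
case: pi => [|u rest] //=.
by case: (Rle_dec 0 tau) => tau_ge0; [exact: vadd_scale0 | lra].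
Qed.

Lemma euler_cons_after u rest t z : tau <= t ->
  euler_traj fU tau (u :: rest) t z =
  euler_traj fU tau rest (t - tau) (vadd z (vscale tau (fU u z))).
Proof.
move=> t_ge /=; case: (Rle_dec t tau) => //= t_le.
have t_eq : t = tau by lra.
by rewrite t_eq Rminus_diag euler_at0.
Qed.

Lemma euler_piece pi j s z : (j < length pi)%nat ->
  INR j * tau <= s <= INR (S j) * tau ->
  let E := euler_traj fU tau pi (INR j * tau) z in
  euler_traj fU tau pi s z =
  vadd E (vscale (s - INR j * tau) (fU (List.nth j pi (0, 0)) E)).
Proof.
elim: pi j s z => [|u rest IH] [|j] s z // j_lt s_in.
- have -> : INR 0 * tau = 0 by rewrite /=; ring.
  move: s_in; rewrite euler_at0 Rminus_0_r /= Rmult_1_l => s_in.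
  by case: (Rle_dec s tau) => s_le //=; lra.
- move: s_in; rewrite !S_INR => s_in.
  have j0 := pos_INR j.
  rewrite (@euler_cons_after _ _ s); last nra.
  rewrite (@euler_cons_after _ _ ((INR j + 1) * tau)); last nra.
  have -> : (INR j + 1) * tau - tau = INR j * tau by ring.
  rewrite (IH j (s - tau)) //; last by rewrite S_INR; lra.
  by congr (vadd _ (vscale _ _)); ring.
Qed.
End EulerImage.

Section Comparison.
Variables (D dD : R -> R) (a b : R).
Hypothesis a_lt_b : a < b.
Hypothesis D_cont :
  forall s, a <= s <= b -> limit1_in D (fun x => a <= x <= b) (D s) s.
Hypothesis D_a : D a <= 0.
Hypothesis D_decr : forall s, a < s < b -> 0 < D s ->
  derivable_pt_lim D s (dD s) /\ dD s <= 0.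

Let I x := a <= x <= b.

Lemma D_near s e : I s -> 0 < e ->
  exists d, 0 < d /\ forall x, I x -> Rabs (x - s) < d -> Rabs (D x - D s) < e.
Proof.
move=> Is e0; have [d [d0 Dd]] := D_cont Is e0.
by exists d; split=> // x Ix xs; exact: (Dd x (conj Ix xs)).
Qed.

Lemma D_pos_interior s : I s -> 0 < D s -> exists s1, a < s1 < b /\ 0 < D s1.
Proof.
move=> Is Ds.
have a_s : a < s.
{ by case: (Rle_lt_or_eq_dec a s (proj1 Is)) => // as_eq; subst s; lra. }
case: (Rle_lt_or_eq_dec s b (proj2 Is)) => s_b; first by exists s; split; [lra|].
subst s.
have [d [d0 Dd]] := @D_near b (D b / 2) ltac:(rewrite /I; lra) ltac:(lra).
set s1 := Rmax ((a + b) / 2) (b - d / 2).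
have h1 : (a + b) / 2 <= s1 := Rmax_l _ _.
have h2 : b - d / 2 <= s1 := Rmax_r _ _.
have s1_b : s1 < b by apply: Rmax_lub_lt; lra.
exists s1; split; first lra.
have := Dd s1 ltac:(rewrite /I; lra) ltac:(rewrite Rabs_left; lra).
by move/Rabs_def2; lra.
Qed.

(* If D s1 > 0 with s1 inside, there is a last point s0 < s1 where D <= 0:
   s0 is the supremum of {x in [a, s1] | D x <= 0}. *)
Lemma D_last_nonpos s1 : a < s1 < b -> 0 < D s1 ->
  exists s0, a <= s0 < s1 /\ D s0 <= 0 /\ forall x, s0 < x <= s1 -> 0 < D x.
Proof.
move=> s1_in Ds1.
pose E x := a <= x <= s1 /\ D x <= 0.
have E_bd : bound E by exists s1 => x [x_in _]; lra.
have E_ne : exists x, E x by exists a; split; [lra|].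
have [s0 [s0_ub s0_lub]] := completeness E E_bd E_ne.
have a_s0 : a <= s0 by apply: s0_ub; split; [lra|].
have s0_s1 : s0 <= s1 by apply: s0_lub => x [x_in _]; lra.
have Ds0 : D s0 <= 0.
{ apply: Rnot_lt_le => Ds0.
  have a_s0' : a < s0.
  { by case: (Rle_lt_or_eq_dec a s0 a_s0) => // as_eq; subst s0; lra. }
  have [d [d0 Dd]] := @D_near s0 (D s0) ltac:(rewrite /I; lra) Ds0.
  have [d' [d'_pos [d'_d d'_a]]] : exists d', 0 < d' /\ d' < d /\ d' < s0 - a.
  { exists (Rmin d (s0 - a) / 2).
    have := Rmin_glb_lt d (s0 - a) 0 d0 ltac:(lra).
    have := Rmin_l d (s0 - a); have := Rmin_r d (s0 - a); lra. }
  suff : s0 <= s0 - d' by lra.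
  apply: s0_lub => x [x_in Dx]; apply: Rnot_lt_le => x_gt.
  have x_s0 : x <= s0 by apply: s0_ub.
  have := Dd x ltac:(rewrite /I; lra) ltac:(rewrite Rabs_left1; lra).
  by move/Rabs_def2; lra. }
have s0_lt : s0 < s1.
{ case: (Rle_lt_or_eq_dec _ _ s0_s1) => // s0_eq.
  by rewrite s0_eq in Ds0; lra. }
exists s0; split; [lra | split=> // x x_in].
apply: Rnot_le_lt => Dx.
have : x <= s0 by apply: s0_ub; split=> //; lra.
lra.
Qed.

Lemma comparison s : a <= s <= b -> D s <= 0.
Proof.
move=> Is; apply: Rnot_lt_le => Ds.
have [s1 [s1_in Ds1]] := D_pos_interior Is Ds.
have [s0 [s0_in [Ds0 Dpos]]] := D_last_nonpos s1_in Ds1.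
have [d [d0 Dd]] := @D_near s0 (D s1 - D s0) ltac:(rewrite /I; lra) ltac:(lra).
have [s0' [s0'_in s0'_d]] : exists s0', s0 < s0' < s1 /\ s0' - s0 < d.
{ exists (s0 + Rmin d (s1 - s0) / 2).
  have := Rmin_glb_lt d (s1 - s0) 0 d0 ltac:(lra).
  have := Rmin_l d (s1 - s0); have := Rmin_r d (s1 - s0); lra. }
have Ds0' : D s0' < D s1.
{ have := Dd s0' ltac:(rewrite /I; lra) ltac:(rewrite Rabs_right; lra).
  by move/Rabs_def2; lra. }
(* Mean value theorem on [s0', s1], where D is positive hence decreasing. *)
have [c [c_in Dmvt]] : exists c, s0' <= c <= s1 /\ D s1 - D s0' = dD c * (s1 - s0').
{ have := MVT_gen D s0' s1 dD; rewrite Rmin_left ?Rmax_right; try lra.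
  have D'x : forall x, s0' <= x <= s1 -> derivable_pt_lim D x (dD x).
  { move=> x x_in.
    by have [] := @D_decr x ltac:(lra) (Dpos x ltac:(lra)). }
  apply=> x x_in.
  - by apply/is_derive_Reals/D'x; lra.
  - by apply: derivable_continuous_pt; exists (dD x); apply: D'x. }
have [_ dDc] := @D_decr c ltac:(lra) (Dpos c ltac:(lra)).
have : dD c * (s1 - s0') <= 0 by apply: Rmult_le_0_r; lra.
lra.
Qed.
End Comparison.

(* With B = C / mu^2, the solution of w' = -mu w + C xi,
   w(0) = eps, is eps e^{-mu xi} + B (mu xi - 1 + e^{-mu xi}).  We replace
   e^{-u} by its Taylor polynomial of degree 4, which keeps w(0) = eps, makes
   w a supersolution (the remainder u^4/24 has the right sign) and keeps all
   estimates polynomial. *)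
Definition taylor_exp4 (u : R) := 1 - u + u*u/2 - u*u*u/6 + u*u*u*u/24.

Lemma taylor_exp4_pos u : 0 < taylor_exp4 u.
Proof.
rewrite /taylor_exp4.
have := pow2_ge_0 (u*u/2 - u + 1); have := pow2_ge_0 (u - 1).
have := pow2_ge_0 (u*u - 2*u); nra.
Qed.

(* gain u = u/2 - u^2/12 bounds u/2 - u^2/6 + u^3/24 on [0, 2] and is
   increasing there.  The barrier stays below eps on [0, tau] as soon as
   (1 + C/(eps mu^2)) gain(mu tau) <= 1, which is what (H) guarantees. *)
Definition gain (u : R) := u/2 - u*u/12.

Section Barrier.
Variables (mu C eps : R).
Hypotheses (mu_gt0 : 0 < mu) (C_gt0 : 0 < C) (eps_gt0 : 0 < eps).

Definition barrier (xi : R) :=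
  (eps + C/(mu*mu)) * taylor_exp4 (mu*xi) + C/(mu*mu) * (mu*xi - 1).
Definition barrier_slope (xi : R) :=
  mu * ((eps + C/(mu*mu)) *
          (-1 + mu*xi - (mu*xi)*(mu*xi)/2 + (mu*xi)*(mu*xi)*(mu*xi)/6)
        + C/(mu*mu)).

Lemma barrier_derive a s :
  derivable_pt_lim (fun s => barrier (s - a)) s (barrier_slope (s - a)).
Proof.
apply/is_derive_Reals; rewrite /barrier /barrier_slope /taylor_exp4.
by auto_derive=> //; field; lra.
Qed.

Lemma barrier_at0 : barrier 0 = eps.
Proof. by rewrite /barrier /taylor_exp4; field; lra. Qed.

Lemma barrier_pos xi : 0 <= xi -> 0 < barrier xi.
Proof.
move=> xi0; rewrite /barrier.
have B0 : 0 < C/(mu*mu) by apply: Rdiv_lt_0_compat; nra.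
have := taylor_exp4_pos (mu*xi); set u := mu * xi => T0.
have u0 : 0 <= u by rewrite /u; nra.
have T1 : 1 - u <= taylor_exp4 u.
{ rewrite /taylor_exp4; have := pow2_ge_0 (u - 2); have : 0 <= u*u by nra.
  nra. }
case: (Rle_dec u 1) => u1; first nra.
have : 0 <= C / (mu*mu) * (u - 1) by nra.
nra.
Qed.

Lemma barrier_le_eps xi U :
  0 <= mu * xi <= U -> U <= 2 -> (1 + C/(eps*mu*mu)) * gain U <= 1 ->
  barrier xi <= eps.
Proof.
move=> [u0 uU] U2 gainU; rewrite /barrier /taylor_exp4.
set u := mu * xi in u0 uU *; set g := C / (eps*mu*mu) in gainU *.
have g0 : 0 < g by apply: Rdiv_lt_0_compat => //; apply: Rmult_lt_0_compat; nra.
have -> : C/(mu*mu) = eps * g by rewrite /g; field; lra.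
have -> : (eps + eps * g) * (1 - u + u*u/2 - u*u*u/6 + u*u*u*u/24) +
    eps * g * (u - 1) =
    eps + eps * u * ((1 + g) * (u/2 - u*u/6 + u*u*u/24) - 1) by field.
have cubic_le : u/2 - u*u/6 + u*u*u/24 <= gain u.
{ rewrite /gain; have : 0 <= u*u*(2-u) by apply: Rmult_le_pos; nra.
  nra. }
have gain_mono : gain u <= gain U.
{ rewrite /gain; have : 0 <= (U - u) * (6 - u - U) by apply: Rmult_le_pos; lra.
  nra. }
have : (1+g) * (u/2 - u*u/6 + u*u*u/24) <= (1+g) * gain U
  by apply: Rmult_le_compat_l; lra.
have : 0 <= eps * u by nra.
nra.
Qed.

Lemma barrier_supersolution xi d : 0 <= xi -> barrier xi < d ->
  - mu * d + C * xi - barrier_slope xi <= 0.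
Proof.
rewrite /barrier /barrier_slope /taylor_exp4 => xi0.
set B := C / (mu*mu).
have -> : C * xi = mu * B * (mu * xi) by rewrite /B; field; lra.
set u := mu * xi.
have u0 : 0 <= u by rewrite /u; nra.
have B0 : 0 < B by apply: Rdiv_lt_0_compat; nra.
have : 0 <= (eps + B) * (u*u*u*u/24) by have := pow2_ge_0 (u*u); nra.
move=> rem0 below; nra.
Qed.
End Barrier.

(* The algebraic core of hypothesis (H): for 0 < x < 1, s = sqrt(1 + x^2)
   and r <= 7/4 (we use r = sqrt 3),
   (4x + r) ((s - x)/2 - x (s - x)^2 / 3) <= 1.
   In terms of d = s - x one has d (s + x) = 1 and 2 x d = 1 - d^2. *)
Lemma hypH_core x s r : 0 < x < 1 -> 0 < s -> s*s = 1 + x*x -> 0 < r <= 7/4 ->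
  (4*x + r) * ((s - x)/2 - x*(s - x)*(s - x)/3) <= 1.
Proof.
move=> x_in s0 ss r_in; set d := s - x.
have d_sx : d * (s + x) = 1 by rewrite /d; nra.
have d0 : 0 < d by rewrite /d; nra.
have d1 : d < 1 by rewrite /d; nra.
have xd : 2*x*d = 1 - d*d by rewrite /d in d_sx *; nra.
have r_bound : r * (2*d + d*d*d) <= 2 + 2*d*d + 2*d*d*d*d.
{ have d3 : 0 <= d*d*d by apply: Rmult_le_pos; nra.
  have : r * (2*d + d*d*d) <= 7/4 * (2*d + d*d*d)
    by apply: Rmult_le_compat_r; lra.
  have := pow2_ge_0 (d*d - 7/16*d); have := pow2_ge_0 (d - 108/100); nra. }
have expand : 6*d*((4*x + r)*(d/2 - x*d*d/3)) = (2 - 2*d*d + r*d)*(2 + d*d)*d.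
{ have -> : 6*d*((4*x + r)*(d/2 - x*d*d/3)) = (2*(2*x*d) + r*d)*(3*d - (2*x*d)*d)
    by field.
  by rewrite xd; ring. }
suff : 6*((4*x + r)*(d/2 - x*d*d/3)) - 6 <= 0 by lra.
by apply: (Rmult_le_reg_l d) => //; rewrite Rmult_0_r; nra.
Qed.

Lemma hypH_barrier_conditions eps lam C tau : 0 < eps -> 0 < tau -> lam < 0 ->
  Rabs lam * G_u eps lam C / 4 < 1 ->
  tau <= G_u eps lam C * (1 - alpha_u lam (G_u eps lam C)) ->
  0 < C /\ - lam * tau <= 2 /\
  (1 + C / (eps * (- lam) * (- lam))) * gain (- lam * tau) <= 1.
Proof.
move=> eps0 tau0 lam0; rewrite /alpha_u.
set mu := - lam; have mu0 : 0 < mu by rewrite /mu; lra.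
have -> : Rabs lam = mu by rewrite Rabs_left.
set G := G_u eps lam C; set x := mu * G / 4.
have -> : (lam * G / 4) ^ 2 = x * x by rewrite /x /mu /=; field.
move=> x1 tauG.
set s := sqrt (1 + x * x).
have ss : s * s = 1 + x * x by rewrite /s sqrt_sqrt; nra.
have s0 : 0 < s by apply: sqrt_lt_R0; nra.
have x_s : x < s by case: (Rle_dec s x) => xs; nra.
rewrite (_ : 1 - (1 + x - s) = s - x) in tauG; last by ring.
have G0 : 0 < G by nra.
have x0 : 0 < x by rewrite /x; nra.
set r := sqrt 3.
have r0 : 0 < r by apply: sqrt_lt_R0; lra.
have r1 : r <= 7/4.
{ rewrite -(sqrt_square (7/4)); last lra.
  by apply: sqrt_le_1_alt; lra. }
have G_def : G = r * eps * mu / C by rewrite /G /G_u Rabs_left.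
have C0 : 0 < C.
{ case: (Rlt_le_dec 0 C) => // C_le.
  have : r * eps * mu / C <= 0.
  { case: (Rle_lt_or_eq_dec _ _ C_le) => [C_lt | ->]; last by rewrite /Rdiv Rinv_0; lra.
    have num0 : 0 < r * eps * mu by apply: Rmult_lt_0_compat; nra.
    have := Rinv_lt_0_compat _ C_lt.
    rewrite /Rdiv; nra. }
  lra. }
have g_def : C / (eps * mu * mu) = r / (4 * x) by rewrite /x G_def; field; lra.
have U_def : 4 * x * (s - x) = mu * (G * (s - x)) by rewrite /x; field.
have tauU : mu * tau <= 4 * x * (s - x)
  by rewrite U_def; apply: Rmult_le_compat_l; lra.
have U2 : 4 * x * (s - x) <= 2.
{ have : (s - x) * (s + x) = 1 by nra.
  nra. }
split=> //; split; first lra.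
rewrite g_def.
have gain_mono : gain (mu * tau) <= gain (4 * x * (s - x)).
{ rewrite /gain; have : 0 <= mu * tau by nra.
  have : 0 <= (4 * x * (s - x) - mu * tau) * (6 - mu * tau - 4 * x * (s - x))
    by apply: Rmult_le_pos; lra.
  nra. }
have core := hypH_core (conj x0 x1) s0 ss (conj r0 r1).
have core_eq : (1 + r / (4 * x)) * gain (4 * x * (s - x)) =
               (4*x + r) * ((s - x)/2 - x*(s - x)*(s - x)/3)
  by rewrite /gain; field; lra.
have rx0 : 0 < r / (4 * x) by apply: Rdiv_lt_0_compat; lra.
have : (1 + r / (4 * x)) * gain (mu * tau) <=
       (1 + r / (4 * x)) * gain (4 * x * (s - x))
  by apply: Rmult_le_compat_l; lra.
lra.
Qed.

Lemma continuity_pt_limit1_in f (P : R -> Prop) t :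
  continuity_pt f t -> limit1_in f P (f t) t.
Proof.
move=> ft e e0; have [d [d0 fd]] := ft e e0.
exists d; split=> // x [_ xt].
case: (Req_dec t x) => [<- | tx]; first by rewrite /dist /= R_dist_eq.
by apply: fd; split; first split.
Qed.

Lemma derivable_limit1_in f (P : R -> Prop) t l :
  derivable_pt_lim f t l -> limit1_in f P (f t) t.
Proof.
by move=> ft; apply/continuity_pt_limit1_in/derivable_continuous_pt; exists l.
Qed.

Lemma limit1_in_comp_cont f g (P : R -> Prop) t :
  continuity_pt g (f t) -> limit1_in f P (f t) t ->
  limit1_in (fun x => g (f x)) P (g (f t)) t.
Proof.
move=> gc fl e e0.
have [d [d0 gd]] := @continuity_pt_limit1_in g (fun _ => True) (f t) gc e e0.
have [d' [d'0 fd]] := fl d d0.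
by exists d'; split=> // x xP; apply: gd; split=> //; apply: fd.
Qed.

Lemma affine_derive c a d t : derivable_pt_lim (fun x => c + (x - a) * d) t d.
Proof. by apply/is_derive_Reals; auto_derive=> //; ring. Qed.

Lemma euler_step_defect M (g : vec M -> vec M) lam Lg C (y E : vec M) xi :
  osl_on_S g lam -> lipschitz_on_S g Lg -> Lg * vnorm (g E) <= C ->
  inS y -> inS E -> inS (vadd E (vscale xi (g E))) -> 0 <= xi ->
  let e := vsub y (vadd E (vscale xi (g E))) in
  vdot e (vsub (g y) (g E)) <= lam * vnorm e ^ 2 + C * xi * vnorm e.
Proof.
move=> g_osl g_lip gE_C yS ES YtS xi0 e.
set Yt := vadd E (vscale xi (g E)) in YtS e *.
have split_defect : vdot e (vsub (g y) (g E)) =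
    vdot e (vsub (g y) (g Yt)) + vdot e (vsub (g Yt) (g E))
  by rewrite !vdot_sub_r; ring.
have osl_part : vdot e (vsub (g y) (g Yt)) <= lam * vnorm e ^ 2
  by rewrite vdot_sym; exact: g_osl.
have lip_part : vnorm (vsub (g Yt) (g E)) <= C * xi.
{ have step : vsub Yt E = vscale xi (g E).
    by apply: functional_extensionality => i; rewrite /vsub /Yt /vadd /vscale; ring.
  have := g_lip _ _ YtS ES; rewrite step vnorm_scale Rabs_right; last lra.
  nra. }
have := cauchy_schwarz e (vsub (g Yt) (g E)).
have := sqrt_pos (vdot e e); rewrite -/(vnorm e) => e0.
nra.
Qed.

Section OneStep.
Variables (M : nat) (g : vec M -> vec M) (lam Lg C eps tau a : R).
Variables (Y : R -> vec M) (E : vec M).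
Hypotheses (tau_gt0 : 0 < tau) (eps_gt0 : 0 < eps).
Hypotheses (lam_lt0 : lam < 0) (C_gt0 : 0 < C).
Hypothesis g_osl : osl_on_S g lam.
Hypothesis g_lip : lipschitz_on_S g Lg.
Hypothesis g_bound : forall w, inS w -> Lg * vnorm (g w) <= C.
Hypothesis step_small : - lam * tau <= 2.
Hypothesis step_gain : (1 + C / (eps * (- lam) * (- lam))) * gain (- lam * tau) <= 1.
Hypothesis Y_cont : forall s, a <= s <= a + tau -> forall i,
  limit1_in (fun x => Y x i) (fun x => a <= x <= a + tau) (Y s i) s.
Hypothesis Y_ode : forall s, a < s < a + tau -> forall i,
  derivable_pt_lim (fun x => Y x i) s (g (Y s) i).
Hypothesis Y_S : forall s, a <= s <= a + tau -> inS (Y s).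
Hypothesis line_S :
  forall s, a <= s <= a + tau -> inS (vadd E (vscale (s - a) (g E))).
Hypothesis start_close : vnorm (vsub (Y a) E) <= eps.

Let mu := - lam.
Let line s := vadd E (vscale (s - a) (g E)).
Let err s := vsub (Y s) (line s).
Let phi s := vdot (err s) (err s).
Let dphi s := 2 * vdot (err s) (vsub (g (Y s)) (g E)).

Lemma E_in_S : inS E.
Proof. by have := @line_S a ltac:(lra); rewrite Rminus_diag vadd_scale0. Qed.

Lemma err_at_start : err a = vsub (Y a) E.
Proof. by rewrite /err /line Rminus_diag vadd_scale0. Qed.

Lemma err_derive s i : a < s < a + tau ->
  derivable_pt_lim (fun x => err x i) s (g (Y s) i - g E i).
Proof.
move=> s_in; apply: derivable_pt_lim_minus; first exact: Y_ode.
exact: affine_derive.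
Qed.

Lemma phi_derive s : a < s < a + tau -> derivable_pt_lim phi s (dphi s).
Proof.
move=> s_in.
have -> : dphi s = \big[Rplus/0]_(i < M)
    ((g (Y s) i - g E i) * err s i + err s i * (g (Y s) i - g E i)).
  by rewrite /dphi /vdot -sumR_scale; apply: eq_bigr => i _; rewrite /vsub; ring.
rewrite /phi /vdot.
apply: (@sumR_derive _ _ (fun i x => err x i * err x i)
          (fun i x => (g (Y s) i - g E i) * err x i + err x i * (g (Y s) i - g E i))).
by move=> i; apply: derivable_pt_lim_mult; apply: err_derive.
Qed.

Lemma phi_cont s : a <= s <= a + tau ->
  limit1_in phi (fun x => a <= x <= a + tau) (phi s) s.
Proof.
move=> s_in; rewrite /phi /vdot.
apply: (@sumR_limit _ _ (fun i x => err x i * err x i)) => i.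
have err_cont : limit1_in (fun x => err x i) (fun x => a <= x <= a + tau) (err s i) s.
{ apply: limit_minus; first exact: Y_cont.
  exact: derivable_limit1_in (affine_derive (E i) a (g E i) s). }
exact: limit_mul.
Qed.

(* Where the error exceeds the barrier, it decreases at least as fast:
   d|err|/ds = <err, g(Y) - g(E)>/|err| <= -mu |err| + C (s - a), which is
   below the barrier slope by the supersolution property. *)
Lemma error_below_barrier_slope s : a < s < a + tau ->
  0 < sqrt (phi s) - barrier mu C eps (s - a) ->
  derivable_pt_lim (fun x => sqrt (phi x) - barrier mu C eps (x - a)) s
    (/ (2 * sqrt (phi s)) * dphi s - barrier_slope mu C eps (s - a)) /\
  / (2 * sqrt (phi s)) * dphi s - barrier_slope mu C eps (s - a) <= 0.
Proof.
move=> s_in above.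
have mu0 : 0 < mu by rewrite /mu; lra.
have w0 : 0 < barrier mu C eps (s - a) by apply: barrier_pos; lra.
set d := sqrt (phi s) in above *.
have d0 : 0 < d by lra.
have phi0 : 0 < phi s.
{ case: (Rlt_le_dec 0 (phi s)) => // phi_le.
  have phi_eq : phi s = 0.
  { by have := vdot_ge0 (err s); rewrite /phi in phi_le *; lra. }
  by move: d0; rewrite /d phi_eq sqrt_0; lra. }
split.
{ apply: derivable_pt_lim_minus; last exact: barrier_derive.
  apply: (derivable_pt_lim_comp phi sqrt); first exact: phi_derive.
  exact: derivable_pt_lim_sqrt. }
have defect := euler_step_defect g_osl g_lip (g_bound E_in_S)
  (@Y_S s ltac:(lra)) E_in_S (@line_S s ltac:(lra)) ltac:(lra).
have {}defect : vdot (err s) (vsub (g (Y s)) (g E)) <= lam * d ^ 2 + C * (s - a) * d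
  by exact: defect.
have -> : / (2 * d) * dphi s = vdot (err s) (vsub (g (Y s)) (g E)) / d
  by rewrite /dphi; field; lra.
have rate : vdot (err s) (vsub (g (Y s)) (g E)) / d <= - mu * d + C * (s - a).
{ apply: (Rmult_le_reg_r d) => //; rewrite /Rdiv Rmult_assoc Rinv_l; last lra.
  rewrite /mu; nra. }
have xi0 : 0 <= s - a by lra.
have w_d : barrier mu C eps (s - a) < d by lra.
have := barrier_supersolution mu0 C_gt0 eps_gt0 xi0 w_d.
lra.
Qed.

Lemma one_step_close s : a <= s <= a + tau ->
  vnorm (vsub (Y s) (vadd E (vscale (s - a) (g E)))) <= eps.
Proof.
move=> s_in.
have mu0 : 0 < mu by rewrite /mu; lra.
pose D x := sqrt (phi x) - barrier mu C eps (x - a).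
have D_cont : forall x, a <= x <= a + tau ->
    limit1_in D (fun x => a <= x <= a + tau) (D x) x.
{ move=> x x_in; apply: limit_minus.
  - exact/limit1_in_comp_cont/phi_cont/x_in/continuity_pt_sqrt/vdot_ge0.
  - exact: derivable_limit1_in (barrier_derive C eps mu0 a x). }
have D_start : D a <= 0.
{ rewrite /D /phi err_at_start Rminus_diag barrier_at0 //.
  by have := start_close; rewrite /vnorm; lra. }
have below : D s <= 0.
{ apply: (comparison _ D_cont D_start _ s_in); first lra.
  exact: error_below_barrier_slope. }
have w_eps : barrier mu C eps (s - a) <= eps.
{ by apply: (@barrier_le_eps _ _ _ _ _ _ _ (mu * tau)) => //; split; nra. }
have -> : vnorm (vsub (Y s) (vadd E (vscale (s - a) (g E)))) = sqrt (phi s) by [].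
by rewrite /D in below; lra.
Qed.
End OneStep.

(* The eps-representative is eps-close: each coordinate differs by at most
   half a cell width 1/(2K), and sqrt M / (2K) <= eps. *)
Lemma representative_close M (K : nat) eps (y z : vec M) : (1 <= M)%nat ->
  0 < eps -> sqrt (INR M) / (2 * eps) <= INR K -> in_cell K z y ->
  vnorm (vsub y z) <= eps.
Proof.
move=> M1 eps0 K_ge cell.
have M_ge1 : 1 <= INR M by apply: (le_INR 1); apply/leP.
have sqrtM0 : 0 < sqrt (INR M) by apply: sqrt_lt_R0; lra.
have sqrtM_le : sqrt (INR M) <= 2 * eps * INR K.
{ have -> : sqrt (INR M) = 2 * eps * (sqrt (INR M) / (2 * eps)) by field; lra.
  by apply: Rmult_le_compat_l; lra. }
have K0 : 0 < INR K by nra.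
have M_le : INR M <= (2 * eps * INR K) * (2 * eps * INR K).
{ rewrite -(sqrt_sqrt (INR M)); last lra.
  by apply: Rmult_le_compat; lra. }
set c := 1 / (2 * INR K).
have Kc : 2 * INR K * c = 1 by rewrite /c; field; lra.
have dot_le : vdot (vsub y z) (vsub y z) <= INR M * (c * c).
{ rewrite -sumR_const /vdot; apply: sumR_le => i.
  have := cell i; rewrite -/c /vsub => yi.
  have : 0 <= (c - (y i - z i)) * (c + (y i - z i)) by apply: Rmult_le_pos; lra.
  nra. }
have : INR M * (c * c) <= eps * eps.
{ have c0 : 0 <= c * c by nra.
  have : INR M * (c * c) <= (2 * eps * INR K) * (2 * eps * INR K) * (c * c)
    by apply: Rmult_le_compat_r.
  have -> : (2 * eps * INR K) * (2 * eps * INR K) * (c * c) =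
            eps * eps * ((2 * INR K * c) * (2 * INR K * c)) by ring.
  by rewrite Kc; lra. }
move=> Mc; rewrite /vnorm -(sqrt_square eps); last lra.
by apply: sqrt_le_1_alt; lra.
Qed.

Lemma find_piece tau t n : 0 < tau -> (1 <= n)%nat -> 0 <= t <= INR n * tau ->
  exists j, (j < n)%nat /\ INR j * tau <= t <= INR j * tau + tau.
Proof.
move=> tau0; elim: n => [|n IH] // _ t_in.
case: (Rle_dec t (INR n * tau)) => t_le; last first.
  by exists n; split=> //; move: t_in; rewrite S_INR; lra.
case: n IH t_in t_le => [|n] IH t_in t_le.
- by exists 0%nat; split=> //; rewrite /= in t_in t_le *; lra.
- have [j [j_lt j_in]] := IH isT ltac:(have := pos_INR n.+1; lra).
  by exists j; split=> //; lia.
Qed.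

Section PatternError.
Variables (M : nat) (fU : mode -> vec M -> vec M) (lam Lc Cc : mode -> R).
Variables (tau eps : R) (pi : list mode) (y z : vec M) (Y : R -> vec M).
Hypotheses (tau_gt0 : 0 < tau) (eps_gt0 : 0 < eps).
Hypothesis mode_osl : forall u, In u pi -> osl_on_S (fU u) (lam u).
Hypothesis mode_lip : forall u, In u pi -> lipschitz_on_S (fU u) (Lc u).
Hypothesis mode_bound :
  forall u, In u pi -> forall w, inS w -> Lc u * vnorm (fU u w) <= Cc u.
Hypothesis mode_step : forall u, In u pi ->
  lam u < 0 /\ 0 < Cc u /\ - lam u * tau <= 2 /\
  (1 + Cc u / (eps * (- lam u) * (- lam u))) * gain (- lam u * tau) <= 1.
Hypothesis Y_sol : exact_traj fU tau pi y Y.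
Hypothesis Y_S : forall t, 0 <= t <= INR (length pi) * tau -> inS (Y t).
Hypothesis euler_S :
  forall t, 0 <= t <= INR (length pi) * tau -> inS (euler_traj fU tau pi t z).
Hypothesis start_close : vnorm (vsub y z) <= eps.

Let close t := vnorm (vsub (Y t) (euler_traj fU tau pi t z)) <= eps.

Lemma piece_close j : (j < length pi)%nat -> close (INR j * tau) ->
  forall s, INR j * tau <= s <= INR j * tau + tau -> close s.
Proof.
move=> j_lt node s s_in; rewrite /close.
have piece_in : forall x, INR j * tau <= x <= INR j * tau + tau ->
    0 <= x <= INR (length pi) * tau.
{ move=> x x_in; have := pos_INR j.
  have : INR j.+1 <= INR (length pi) by apply/le_INR/leP.
  by rewrite S_INR; split; nra. }
have euler_line : forall x, INR j * tau <= x <= INR j * tau + tau ->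
    euler_traj fU tau pi x z =
    vadd (euler_traj fU tau pi (INR j * tau) z)
      (vscale (x - INR j * tau)
         (fU (List.nth j pi (0, 0)) (euler_traj fU tau pi (INR j * tau) z))).
  by move=> x x_in; apply: euler_piece; rewrite // S_INR; lra.
have u_in : In (List.nth j pi (0, 0)) pi by apply/nth_In/ltP.
have [lam0 [C0 [small gain1]]] := mode_step u_in.
have [_ [Y_cont Y_ode]] := Y_sol.
rewrite euler_line //.
apply: (one_step_close tau_gt0 eps_gt0 lam0 C0 (mode_osl u_in) (mode_lip u_in)
          (mode_bound u_in) small gain1) => //.
- move=> x x_in i.
  apply: (@limit1_imp _ (fun x => 0 <= x <= INR (length pi) * tau)).
  + exact: piece_in.
  + exact/Y_cont/piece_in.
- by move=> x x_in i; apply: Y_ode; rewrite // S_INR; lra.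
- by move=> x x_in; apply/Y_S/piece_in.
- by move=> x x_in; rewrite -euler_line //; apply/euler_S/piece_in.
Qed.

Lemma node_close j : (j <= length pi)%nat -> close (INR j * tau).
Proof.
elim: j => [_ | j IH j_lt].
- have [Y0 _] := Y_sol.
  by rewrite /close /= Rmult_0_l Y0 euler_at0.
- apply: (piece_close j_lt (IH (ltnW j_lt))).
  by rewrite S_INR; lra.
Qed.

Lemma pattern_close t : 0 <= t <= INR (length pi) * tau -> close t.
Proof.
case: (posnP (length pi)) => [len0 | len_pos] t_in.
  have -> : t = INR 0 * tau by move: t_in; rewrite len0 /=; lra.
  exact: node_close.
have [j [j_lt j_in]] := find_piece tau_gt0 len_pos t_in.
exact: (piece_close j_lt (node_close (ltnW j_lt))).
Qed.
End PatternError.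

Theorem theorem1
  (M k : nat) (Len sigma tau eps : R)
  (U : list mode) (f : vec M -> vec M)
  (Lc lam Cc : mode -> R) (K : nat)
  (y z : vec M) (pi : list mode) (Y : R -> vec M) (t : R) :
  (1 <= M)%nat -> (1 <= k)%nat ->
  0 < Len -> 0 < sigma -> 0 < tau -> 0 < eps ->
  (* U is a finite subset of [0,1]^2 *)
  (forall u, In u U -> 0 <= fst u <= 1 /\ 0 <= snd u <= 1) ->
  let h := Len / INR (M + 1) in
  let fU := fu h sigma f in
  (* Lipschitz constants, OSL constants, C_u *)
  (forall u, In u U -> lipschitz_on_S (fU u) (Lc u)) ->
  (forall u, In u U -> is_OSL_constant (fU u) (lam u)) ->
  (forall u, In u U -> is_C_constant (fU u) (Lc u) (Cc u)) ->
  (* all exact trajectories remain in S *)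
  (forall pi' y' Y', pattern_in U k pi' -> inS y' -> exact_traj fU tau pi' y' Y' ->
     forall t', 0 <= t' <= INR k * tau -> inS (Y' t')) ->
  (* all Euler trajectories (from grid points) remain in S *)
  (forall pi' z', pattern_in U k pi' -> is_center K z' ->
     forall t', 0 <= t' <= INR k * tau -> inS (euler_traj fU tau pi' t' z')) ->
  (* grid *)
  sqrt (INR M) / (2 * eps) <= INR K ->
  (* Hypothesis (H) *)
  (forall u, In u U ->
     let G := G_u eps (lam u) (Cc u) in
     lam u < 0 /\ Rabs (lam u) * G / 4 < 1 /\ tau <= G * (1 - alpha_u (lam u) G)) ->
  (* the statement *)
  inS y -> is_representative K y z ->
  pattern_in U k pi -> exact_traj fU tau pi y Y ->
  0 <= t <= INR k * tau ->
  vnorm (vsub (Y t) (euler_traj fU tau pi t z)) <= eps.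
Proof.
move=> M1 _ _ _ tau0 eps0 _ h fU lip osl C_sup traj_S euler_S grid hypH
  yS [z_center z_cell] pat Y_sol t_in.
have [len_pi pi_U] := pat.
rewrite -len_pi in t_in.
apply: (@pattern_close M fU lam Lc Cc tau eps pi y z Y) => //.
- by move=> u /pi_U /osl [].
- by move=> u /pi_U /lip.
- by move=> u /pi_U /C_sup [ub _] w wS; apply: ub; exists w.
- move=> u /pi_U /hypH [lam0 [small tauG]].
  by split=> //; apply: hypH_barrier_conditions.
- by move=> s s_in; apply: (traj_S _ _ _ pat yS Y_sol); rewrite -len_pi.
- by move=> s s_in; apply: (euler_S _ _ pat z_center); rewrite -len_pi.
- exact: representative_close grid z_cell.
Qed.
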